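(* Let $a,b,c,\alpha\in\mathbb{R}$ with $\alpha\neq 0$ and $b\neq 0$, and let $\Omega\subset\mathbb{R}$ be a compact interval containing $0$ in its interior. Consider the control system on $\mathbb{R}^2$ $$\dot s=\omega b,\qquad \dot t=\tfrac12\alpha s^2+\omega(c+as),\qquad \omega\in\Omega,$$ with drift $f_0(s,t)=(0,\tfrac12\alpha s^2)$. Then the control sets of this system are exactly the one-point sets given by the singularities of the drift, namely the singletons $\{(0,t)\}$, $t\in\mathbb{R}$.
   Context: Controls are piecewise constant functions $\omega:\mathbb{R}\to\Omega$; $\varphi(\tau,\mathbf v,\omega)$ is the solution at time $\tau$ from $\mathbf v$, and $\mathcal O^+(\mathbf v)$ is the set of points reachable from $\mathbf v$ in nonnegative time. A control set is a nonempty set $\mathcal C\subset\mathbb{R}^2$, maximal with respect to inclusion, such that (i) for every $x\in\mathcal C$ there is a control $\omega$ with $\varphi(\tau,x,\omega)\in\mathcal C$ for all $\tau\ge0$, and (ii) $\mathcal C\subset\overline{\mathcal O^+(x)}$ for all $x\in\mathcal C$. This is the singular linear control system on $(\mathbb{R}\mathbf e_1\times\{0\})\backslash\mathbb{H}\simeq\mathbb{R}^2$ with $\alpha\neq0$, $\lambda=\beta=\gamma=0$. *)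

From Stdlib Require Import Reals Lra List.
From Coquelicot Require Import Coquelicot.
Open Scope R_scope.

Definition pt := (R * R)%type.

Definition rhs_s (b : R) (p : pt) (w : R) : R := w * b.
Definition rhs_t (a c alpha : R) (p : pt) (w : R) : R :=
  / 2 * alpha * (fst p) ^ 2 + w * (c + a * fst p).

(* Admissible controls: piecewise constant functions R -> Omega = [wmin, wmax]:
   on every compact interval [lo, hi] there are finitely many switching times
   (a list l) such that omega is constant between consecutive switching times. *)
Definition piecewise_constant (omega : R -> R) : Prop :=
  forall lo hi : R, exists l : list R,
    forall r1 r2 : R, lo <= r1 <= hi -> lo <= r2 <= hi ->
      (forall z, In z l -> ~ (Rmin r1 r2 <= z <= Rmax r1 r2)) ->
      omega r1 = omega r2.

Definition admissible (wmin wmax : R) (omega : R -> R) : Prop :=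
  piecewise_constant omega /\ forall r, wmin <= omega r <= wmax.

Definition is_solution (a b c alpha : R) (omega : R -> R) (v : pt) (x : R -> pt) : Prop :=
  forall tau : R,
    is_RInt (fun r => rhs_s b (x r) (omega r)) 0 tau (fst (x tau) - fst v) /\
    is_RInt (fun r => rhs_t a c alpha (x r) (omega r)) 0 tau (snd (x tau) - snd v).

Definition reach_plus (a b c alpha wmin wmax : R) (v : pt) (p : pt) : Prop :=
  exists (omega : R -> R) (x : R -> pt) (tau : R),
    admissible wmin wmax omega /\ is_solution a b c alpha omega v x /\
    0 <= tau /\ x tau = p.

(* Closure in R^2 (box neighbourhoods generate the usual topology). *)
Definition closure2 (A : pt -> Prop) (p : pt) : Prop :=
  forall eps : R, 0 < eps -> exists q, A q /\
    Rabs (fst p - fst q) < eps /\ Rabs (snd p - snd q) < eps.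

Definition ctrl_invariant (a b c alpha wmin wmax : R) (C : pt -> Prop) : Prop :=
  forall p, C p -> exists (omega : R -> R) (x : R -> pt),
    admissible wmin wmax omega /\ is_solution a b c alpha omega p x /\
    forall tau, 0 <= tau -> C (x tau).

Definition approx_ctrl (a b c alpha wmin wmax : R) (C : pt -> Prop) : Prop :=
  forall p, C p -> forall q, C q -> closure2 (reach_plus a b c alpha wmin wmax p) q.

Definition ctrl_candidate (a b c alpha wmin wmax : R) (C : pt -> Prop) : Prop :=
  (exists p, C p) /\ ctrl_invariant a b c alpha wmin wmax C /\
  approx_ctrl a b c alpha wmin wmax C.

Definition control_set (a b c alpha wmin wmax : R) (C : pt -> Prop) : Prop :=
  ctrl_candidate a b c alpha wmin wmax C /\
  forall D : pt -> Prop, ctrl_candidate a b c alpha wmin wmax D ->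
    (forall p, C p -> D p) -> forall p, D p -> C p.

From Stdlib Require Import Reals Lra List.
From Coquelicot Require Import Coquelicot.
Open Scope R_scope.

(* The function V(s, t) = (2/alpha) (t - (c/b) s - a s^2 / (2b)) satisfies dV/dt = s^2 along
   every trajectory, whatever the control: the control terms cancel because d(s^2)/dt = 2 b w s.
   So V is nondecreasing along trajectories, and since |ds/dt| <= (wmax - wmin) |b| = L, V gains
   at least |s|^3 / (8 L) in a time window of length |s| / (2 L) next to any time with value s.
   V is continuous, so both bounds pass to the closures of positive orbits.  In a set where all
   points approximately reach each other, V is therefore constant and s vanishes; on the axis
   s = 0, V determines t.  Hence a candidate containing an equilibrium (0, t) is {(0, t)}, and
   {(0, t)} is itself a candidate.  Every candidate contains such a point: following a
   trajectory that stays in it from a point p, V grows by |s(p)|^3 / (8 L) and must come back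
   down to V(p), so s(p) = 0. *)

Lemma is_RInt_congr (f g : R -> R) (u w l l' : R) :
  (forall r, Rmin u w < r < Rmax u w -> f r = g r) -> l = l' ->
  is_RInt f u w l -> is_RInt g u w l'.
Proof. intros Hfg <-. apply is_RInt_ext, Hfg. Qed.

Lemma is_RInt_value_unique (f : R -> R) (u w l l' : R) :
  is_RInt f u w l -> is_RInt f u w l' -> l = l'.
Proof.
  intros H H'. rewrite <- (@is_RInt_unique R_CompleteNormedModule _ _ _ _ H).
  exact (is_RInt_unique _ _ _ _ H').
Qed.

Lemma is_RInt_increment (f g : R -> R) (g0 : R) :
  (forall tau, is_RInt f 0 tau (g tau - g0)) -> forall u w, is_RInt f u w (g w - g u).
Proof.
  intros Hg u w.
  refine (is_RInt_congr _ _ _ _ _ _ _ _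
            (is_RInt_Chasles _ _ _ _ _ _ (is_RInt_swap _ _ _ _ (Hg u)) (Hg w))); [easy|].
  cbn. ring.
Qed.

Section Solution.
Context {a b c alpha : R} {om : R -> R} {v : pt} {x : R -> pt}.
Hypothesis Hx : is_solution a b c alpha om v x.

Lemma solution_fst_increment u w :
  is_RInt (fun r => om r * b) u w (fst (x w) - fst (x u)).
Proof. apply (is_RInt_increment _ (fun r => fst (x r)) (fst v)). intro tau; apply Hx. Qed.

Lemma solution_snd_increment u w :
  is_RInt (fun r => rhs_t a c alpha (x r) (om r)) u w (snd (x w) - snd (x u)).
Proof. apply (is_RInt_increment _ (fun r => snd (x r)) (snd v)). intro tau; apply Hx. Qed.

Lemma solution_at_0 : x 0 = v.
Proof.
  destruct (Hx 0) as [Hs Ht].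
  apply (is_RInt_value_unique _ _ _ _ _ (is_RInt_point _ 0)) in Hs, Ht. cbn in Hs, Ht.
  apply injective_projections; lra.
Qed.

End Solution.

Definition switches_within (om : R -> R) (l : list R) (u w : R) : Prop :=
  forall r1 r2, u < r1 < w -> u < r2 < w ->
    (forall z, In z l -> ~ (Rmin r1 r2 <= z <= Rmax r1 r2)) -> om r1 = om r2.

Lemma switches_within_cons (om : R -> R) (z : R) (l : list R) (u w u' w' : R) :
  switches_within om (z :: l) u w -> u <= u' -> w' <= w -> z <= u' \/ w' <= z ->
  switches_within om l u' w'.
Proof.
  intros Hs hu hw hz r1 r2 h1 h2 hl. apply Hs; try lra.
  intros z' [<-|hz']; [|exact (hl z' hz')].
  unfold Rmin, Rmax; destruct (Rle_dec r1 r2); lra.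
Qed.

(* The chain rule int S S' = S^2 / 2 for S' = b om: between consecutive switching times S is
   affine and the fundamental theorem of calculus applies. *)
Section HalfSquare.
Variables (om : R -> R) (b : R) (S : R -> R).
Hypothesis HS : forall u w, is_RInt (fun r => om r * b) u w (S w - S u).

Lemma affine_of_constant_control u w k : (forall r, u < r < w -> om r = k) ->
  forall r, u <= r <= w -> S r = S u + k * b * (r - u).
Proof.
  intros Hk r hr.
  assert (Hc : is_RInt (fun _ => k * b) u r (S r - S u)).
  { refine (is_RInt_congr _ _ _ _ _ _ _ eq_refl (HS u r)).
    intros y hy. rewrite Rmin_left, Rmax_right in hy by lra. rewrite Hk by lra. reflexivity. }
  apply (is_RInt_value_unique _ _ _ _ _ (is_RInt_const _ _ _)) in Hc. cbn in Hc.
  replace (S r) with (S u + (S r - S u)) by ring. rewrite <- Hc. ring.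
Qed.

Lemma is_RInt_half_sq_const u w k : u <= w -> (forall r, u < r < w -> om r = k) ->
  is_RInt (fun r => b * (om r * S r)) u w ((S w ^ 2 - S u ^ 2) / 2).
Proof.
  intros huw Hk.
  pose proof (affine_of_constant_control u w k Hk) as Haff.
  set (F r := (S u + k * b * (r - u)) ^ 2 / 2).
  assert (HF : is_RInt (fun r => b * (k * (S u + k * b * (r - u)))) u w (minus (F w) (F u))).
  { apply (@is_RInt_derive R_CompleteNormedModule).
    - intros r _. unfold F. auto_derive; [exact I|]. field.
    - intros r _. apply (@ex_derive_continuous R_AbsRing R_NormedModule). auto_derive. exact I. }
  refine (is_RInt_congr _ _ _ _ _ _ _ _ HF).
  - intros r hr. rewrite Rmin_left, Rmax_right in hr by lra.
    rewrite Hk, (Haff r) by lra. reflexivity.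
  - unfold F. cbn. rewrite (Haff w) by lra. field.
Qed.

Lemma is_RInt_half_sq_switches l : forall u w, u <= w -> switches_within om l u w ->
  is_RInt (fun r => b * (om r * S r)) u w ((S w ^ 2 - S u ^ 2) / 2).
Proof.
  induction l as [|z l IH]; intros u w huw Hl.
  - apply (is_RInt_half_sq_const u w (om ((u + w) / 2)) huw).
    intros r hr. apply Hl; [lra|lra|]. intros z [].
  - assert (Hsub : forall u' w', u <= u' -> w' <= w -> z <= u' \/ w' <= z ->
                   switches_within om l u' w')
      by (intros; eapply switches_within_cons; eauto).
    destruct (Rle_or_lt z u) as [hzu|hzu]; [|destruct (Rle_or_lt w z) as [hwz|hwz]].
    + apply IH, Hsub; lra.
    + apply IH, Hsub; lra.
    + pose proof (IH u z ltac:(lra) ltac:(apply Hsub; lra)) as H1.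
      pose proof (IH z w ltac:(lra) ltac:(apply Hsub; lra)) as H2.
      refine (is_RInt_congr _ _ _ _ _ _ _ _ (is_RInt_Chasles _ _ _ _ _ _ H1 H2)); [easy|].
      cbn. field.
Qed.

Lemma is_RInt_half_sq u w : piecewise_constant om -> u <= w ->
  is_RInt (fun r => b * (om r * S r)) u w ((S w ^ 2 - S u ^ 2) / 2).
Proof.
  intros Hpc huw. destruct (Hpc u w) as [l Hl].
  apply (is_RInt_half_sq_switches l u w huw).
  intros r1 r2 h1 h2. apply Hl; lra.
Qed.

End HalfSquare.

Section ContinuityR.
Context {U : UniformSpace}.

Lemma continuous_Rminus (f g : U -> R) (q : U) :
  continuous f q -> continuous g q -> continuous (fun p => f p - g p) q.
Proof. exact (continuous_minus f g q). Qed.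

Lemma continuous_Rmult (f g : U -> R) (q : U) :
  continuous f q -> continuous g q -> continuous (fun p => f p * g p) q.
Proof. exact (continuous_mult f g q). Qed.

Lemma continuous_Rpow (f : U -> R) (n : nat) (q : U) :
  continuous f q -> continuous (fun p => f p ^ n) q.
Proof.
  intros Hf. induction n as [|n IH]; [apply continuous_const|].
  exact (continuous_Rmult _ _ _ Hf IH).
Qed.

End ContinuityR.

Lemma closure2_lower_bound (A : pt -> Prop) (f : pt -> R) (m : R) (q : pt) :
  continuous f q -> (forall p, A p -> m <= f p) -> closure2 A q -> m <= f q.
Proof.
  intros Hf HA Hq. apply Rnot_lt_le. intros hlt.
  destruct (proj1 (filterlim_locally f (f q)) Hf
              (mkposreal _ (proj2 (Rlt_0_minus _ _) hlt))) as [delta Hdelta].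
  destruct (Hq delta (cond_pos delta)) as (p & Ap & h1 & h2).
  assert (Hball : ball q delta p).
  { rewrite Rabs_minus_sym in h1, h2. split; assumption. }
  specialize (Hdelta p Hball). specialize (HA p Ap).
  change (Rabs (f p - f q) < m - f q) in Hdelta.
  apply Rabs_def2 in Hdelta. lra.
Qed.

Definition lyapunov (a b c alpha : R) (p : pt) : R :=
  2 / alpha * (snd p - c / b * fst p - a / (2 * b) * fst p ^ 2).

Lemma lyapunov_continuous (a b c alpha : R) (q : pt) : continuous (lyapunov a b c alpha) q.
Proof.
  destruct q as [s t]. unfold lyapunov.
  pose proof (continuous_fst s t : continuous (fun p : pt => fst p) (s, t)) as Hs.
  pose proof (continuous_snd s t : continuous (fun p : pt => snd p) (s, t)) as Ht.
  repeat first [ apply continuous_Rminus | apply continuous_Rmult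
               | apply continuous_Rpow | apply continuous_const | assumption ].
Qed.

Lemma lyapunov_axis_inj (a b c alpha t t' : R) : alpha <> 0 ->
  lyapunov a b c alpha (0, t) = lyapunov a b c alpha (0, t') -> t = t'.
Proof.
  unfold lyapunov; cbn. intros halpha E.
  apply (Rmult_eq_reg_l (2 / alpha)); [lra|].
  unfold Rdiv. apply Rmult_integral_contrapositive_currified; [lra|].
  now apply Rinv_neq_0_compat.
Qed.

Lemma Rabs_cube_div_le_0 (s k : R) : 0 < k -> Rabs s ^ 3 / k <= 0 -> s = 0.
Proof.
  intros hk hs. destruct (Req_dec s 0) as [|hne]; [assumption|exfalso].
  pose proof (Rdiv_lt_0_compat _ _ (pow_lt _ 3 (Rabs_pos_lt _ hne)) hk). lra.
Qed.

Lemma admissible_zero wmin wmax : wmin <= 0 <= wmax -> admissible wmin wmax (fun _ => 0).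
Proof. intros hw. split; [intros lo hi; exists nil; reflexivity|intros; lra]. Qed.

Lemma axis_equilibrium a b c alpha t :
  is_solution a b c alpha (fun _ => 0) (0, t) (fun _ => (0, t)).
Proof.
  intro tau. unfold rhs_s, rhs_t.
  split; refine (is_RInt_congr (fun _ => 0) _ _ _ _ _ _ _ (is_RInt_const 0 tau 0));
    intros; cbn; ring.
Qed.

Lemma axis_point_candidate a b c alpha wmin wmax C t : wmin <= 0 <= wmax ->
  (forall p, C p <-> p = (0, t)) -> ctrl_candidate a b c alpha wmin wmax C.
Proof.
  intros hw HC.
  assert (Ct : C (0, t)) by now apply HC.
  split; [now exists (0, t)|split].
  - intros p Cp. apply HC in Cp as ->.
    exists (fun _ => 0), (fun _ => (0, t)).
    split; [now apply admissible_zero|]. split; [apply axis_equilibrium|]. now intros.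
  - intros p Cp q Cq eps heps. apply HC in Cp as ->. apply HC in Cq as ->.
    exists (0, t). split.
    + exists (fun _ => 0), (fun _ => (0, t)), 0.
      split; [now apply admissible_zero|].
      split; [apply axis_equilibrium|]. split; [lra|reflexivity].
    + cbn. rewrite !Rminus_diag, Rabs_R0. lra.
Qed.

Section Lyapunov.
Context {a b c alpha wmin wmax : R}.
Hypotheses (alpha_neq0 : alpha <> 0) (b_neq0 : b <> 0) (Omega_interior : wmin < 0 < wmax).

Let V := lyapunov a b c alpha.
Let L := (wmax - wmin) * Rabs b.

Lemma speed_bound_pos : 0 < L.
Proof. apply Rmult_lt_0_compat; [lra|now apply Rabs_pos_lt]. Qed.

Section Trajectory.
Context {om : R -> R} {v : pt} {x : R -> pt}.
Hypotheses (Hom : admissible wmin wmax om) (Hx : is_solution a b c alpha om v x).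

Lemma is_RInt_lyapunov u w : u <= w ->
  is_RInt (fun r => fst (x r) ^ 2) u w (V (x w) - V (x u)).
Proof.
  intros huw.
  pose proof (solution_fst_increment Hx u w) as Hs.
  pose proof (solution_snd_increment Hx u w) as Ht.
  pose proof (is_RInt_half_sq om b (fun r => fst (x r)) (solution_fst_increment Hx) u w
                (proj1 Hom) huw) as Hsq.
  refine (is_RInt_congr _ _ _ _ _ _ _ _
    (is_RInt_scal _ _ _ (2 / alpha) _
      (is_RInt_minus _ _ _ _ _ _
        (is_RInt_minus _ _ _ _ _ _ Ht (is_RInt_scal _ _ _ (c / b) _ Hs))
        (is_RInt_scal _ _ _ (a / b) _ Hsq)))).
  - intros r _. cbn. unfold rhs_t. field. split; assumption.
  - cbn. unfold V, lyapunov. field. split; assumption.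
Qed.

Lemma lyapunov_nondecreasing u w : u <= w -> V (x u) <= V (x w).
Proof.
  intros huw.
  pose proof (is_RInt_ge_0 _ _ _ _ huw (is_RInt_lyapunov u w huw)
                (fun r _ => pow2_ge_0 (fst (x r)))).
  lra.
Qed.

Lemma lyapunov_gain u w m : u <= w -> 0 <= m ->
  (forall r, u <= r <= w -> m <= Rabs (fst (x r))) ->
  V (x u) + m ^ 2 * (w - u) <= V (x w).
Proof.
  intros huw hm Hm.
  assert (Hle : (w - u) * m ^ 2 <= V (x w) - V (x u)).
  { refine (is_RInt_le _ _ _ _ _ _ huw (is_RInt_const u w (m ^ 2))
              (is_RInt_lyapunov u w huw) _).
    intros r hr. rewrite <- (pow2_abs (fst (x r))).
    apply pow_incr. split; [assumption|apply Hm; lra]. }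
  rewrite Rmult_comm in Hle. lra.
Qed.

Lemma fst_lipschitz u w : Rabs (fst (x w) - fst (x u)) <= L * Rabs (w - u).
Proof.
  rewrite Rmult_comm.
  refine (norm_RInt_le_const_abs _ _ _ _ _ _ (solution_fst_increment Hx u w)).
  intros r _. change (Rabs (om r * b) <= L). unfold L. rewrite Rabs_mult.
  apply Rmult_le_compat_r; [apply Rabs_pos|].
  pose proof (proj2 Hom r). apply Rabs_le. lra.
Qed.

Lemma lyapunov_gain_near u w r0 : u <= r0 <= w -> w - u = Rabs (fst (x r0)) / (2 * L) ->
  V (x u) + Rabs (fst (x r0)) ^ 3 / (8 * L) <= V (x w).
Proof.
  intros hr0 hwu. pose proof speed_bound_pos as hL.
  set (s0 := Rabs (fst (x r0))) in *.
  assert (hs0 : 0 <= s0) by apply Rabs_pos.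
  assert (Hfar : forall r, u <= r <= w -> s0 / 2 <= Rabs (fst (x r))).
  { intros r hr. pose proof (fst_lipschitz r r0) as Hlip.
    pose proof (Rabs_triang_inv (fst (x r0)) (fst (x r))) as Htri.
    assert (L * Rabs (r0 - r) <= L * (w - u)).
    { apply Rmult_le_compat_l; [lra|]. apply Rabs_le. lra. }
    assert (L * (w - u) = s0 / 2) by (rewrite hwu; field; lra).
    fold s0 in Htri. lra. }
  replace (s0 ^ 3 / (8 * L)) with ((s0 / 2) ^ 2 * (w - u)) by (rewrite hwu; field; lra).
  apply lyapunov_gain; [lra|lra|exact Hfar].
Qed.

Lemma lyapunov_gain_initial :
  V v + Rabs (fst v) ^ 3 / (8 * L) <= V (x (Rabs (fst v) / (2 * L))).
Proof.
  pose proof speed_bound_pos as hL.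
  assert (0 <= Rabs (fst v) / (2 * L)) by (apply Rdiv_le_0_compat; [apply Rabs_pos|lra]).
  rewrite <- (solution_at_0 Hx) at 1 2.
  apply lyapunov_gain_near; [lra|]. rewrite (solution_at_0 Hx). ring.
Qed.

Lemma lyapunov_gain_from_axis tau : fst v = 0 -> 0 <= tau ->
  V v + Rabs (fst (x tau)) ^ 3 / (8 * L) <= V (x tau).
Proof.
  intros hv htau. pose proof speed_bound_pos as hL.
  set (h := Rabs (fst (x tau)) / (2 * L)).
  (* s needs time |s(tau)| / L to grow from 0, so the window [tau - h, tau] lies in [0, tau]. *)
  assert (hh : 0 <= h <= tau).
  { pose proof (fst_lipschitz 0 tau) as Hlip.
    rewrite (solution_at_0 Hx), hv, Rminus_0_r, Rminus_0_r, (Rabs_right tau) in Hlip by lra.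
    split; [apply Rdiv_le_0_compat; [apply Rabs_pos|lra]|].
    unfold h. apply Rle_div_l; nra. }
  pose proof (lyapunov_nondecreasing 0 (tau - h) ltac:(lra)) as Hmono.
  rewrite (solution_at_0 Hx) in Hmono.
  pose proof (lyapunov_gain_near (tau - h) tau tau ltac:(lra) ltac:(unfold h; ring)).
  lra.
Qed.

End Trajectory.

Lemma closure_reach_lyapunov p q :
  closure2 (reach_plus a b c alpha wmin wmax p) q -> V p <= V q.
Proof.
  apply closure2_lower_bound; [apply lyapunov_continuous|].
  intros q' (om & x & tau & Hom & Hx & htau & <-).
  rewrite <- (solution_at_0 Hx) at 1. exact (lyapunov_nondecreasing Hom Hx 0 tau htau).
Qed.

Lemma closure_reach_from_axis p q : fst p = 0 ->
  closure2 (reach_plus a b c alpha wmin wmax p) q ->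
  V p + Rabs (fst q) ^ 3 / (8 * L) <= V q.
Proof.
  intros hp Hq.
  enough (V p <= V q - Rabs (fst q) ^ 3 / (8 * L)) by lra.
  refine (closure2_lower_bound _ (fun q => V q - Rabs (fst q) ^ 3 / (8 * L)) _ q _ _ Hq).
  - destruct q as [s t].
    apply continuous_Rminus; [apply lyapunov_continuous|].
    apply continuous_Rmult; [|apply continuous_const].
    apply continuous_Rpow, (continuous_comp (fun q : pt => fst q) Rabs).
    + apply continuous_fst.
    + apply continuous_Rabs.
  - intros q' (om & x & tau & Hom & Hx & htau & <-).
    pose proof (lyapunov_gain_from_axis Hom Hx tau hp htau). lra.
Qed.

Lemma approx_ctrl_axis_point C t p : approx_ctrl a b c alpha wmin wmax C ->
  C (0, t) -> C p -> p = (0, t).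
Proof.
  intros HC Ct Cp.
  pose proof (closure_reach_from_axis (0, t) p eq_refl (HC _ Ct _ Cp)) as Hup.
  pose proof (closure_reach_lyapunov p (0, t) (HC _ Cp _ Ct)) as Hdown.
  pose proof speed_bound_pos as hL.
  assert (0 <= Rabs (fst p) ^ 3 / (8 * L))
    by (apply Rdiv_le_0_compat; [apply pow_le, Rabs_pos|lra]).
  assert (hs : fst p = 0) by (apply (Rabs_cube_div_le_0 _ (8 * L)); lra).
  assert (hV : V p = V (0, t)) by lra.
  destruct p as [s t']. cbn in hs. subst s.
  now rewrite (lyapunov_axis_inj a b c alpha t' t alpha_neq0 hV).
Qed.

Lemma ctrl_candidate_meets_axis C : ctrl_candidate a b c alpha wmin wmax C ->
  exists t, C (0, t).
Proof.
  intros [[p Cp] [Hinv Happ]].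
  destruct (Hinv p Cp) as (om & x & Hom & Hx & Hstay).
  pose proof speed_bound_pos as hL.
  assert (hh : 0 <= Rabs (fst p) / (2 * L))
    by (apply Rdiv_le_0_compat; [apply Rabs_pos|lra]).
  pose proof (lyapunov_gain_initial Hom Hx) as Hup.
  pose proof (closure_reach_lyapunov _ _ (Happ _ (Hstay _ hh) _ Cp)) as Hdown.
  assert (hs : fst p = 0) by (apply (Rabs_cube_div_le_0 _ (8 * L)); lra).
  exists (snd p). destruct p as [s t]. cbn in hs. subst s. exact Cp.
Qed.

End Lyapunov.

Theorem proposition7 (a b c alpha wmin wmax : R) :
  alpha <> 0 -> b <> 0 -> wmin < 0 < wmax ->
  forall C : pt -> Prop,
    control_set a b c alpha wmin wmax C <->
    exists t : R, forall p : pt, C p <-> p = (0, t).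
Proof.
  intros halpha hb hOmega C. split.
  - intros [HC _].
    destruct (ctrl_candidate_meets_axis halpha hb hOmega C HC) as [t Ct].
    exists t. intros p. split; [|now intros ->].
    intros Cp. exact (approx_ctrl_axis_point halpha hb hOmega C t p (proj2 (proj2 HC)) Ct Cp).
  - intros [t Ht]. split; [apply (axis_point_candidate _ _ _ _ _ _ _ t); [lra|exact Ht]|].
    intros D HD HCD p Dp. apply Ht.
    apply (approx_ctrl_axis_point halpha hb hOmega D t p (proj2 (proj2 HD))); [|exact Dp].
    now apply HCD, Ht.
Qed.
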